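(* Let $(X,Y,\phi)$ be an $L$-context and $X'\subseteq X$. The following are equivalent: (i) $X\setminus X'$ is $\phi$-reducible in RST, i.e. for every $\mu\in L^X$ there is $\mu'\in L^{X'}$ with $\phi^\exists\mu=(\phi_{X',Y})^\exists\mu'$; (ii) $\phi^\exists\mu=(\phi_{X',Y})^\exists\big((\phi^\forall\phi^\exists\mu)_{X'}\big)$ for all $\mu\in L^X$; (iii) $\phi^\exists\phi^\forall=(\phi_{X',Y})^\exists(\phi_{X',Y})^\forall$ as maps $L^Y\to L^Y$; (iv) the map $\mathcal{K}\phi_{X',Y}\to\mathcal{K}\phi$, $\mu'\mapsto\phi^\forall\phi^\exists\underline{\mu'}$, is surjective (and hence an isomorphism of complete $L$-lattices).
   Context: $L=(L,* )$ is a complete residuated lattice: a complete lattice with bottom $0$ and top $1$, equipped with a commutative associative operation $*$ with unit $1$ satisfying $a*\bigvee_i b_i=\bigvee_i a*b_i$; $\to$ is its residuum ($a*b\le c\iff a\le b\to c$). An $L$-context is a triple $(X,Y,\phi)$ with $X,Y$ sets and $\phi\colon X\times Y\to L$. $L^X$ is the set of maps $X\to L$ with $L$-order $L^X(\mu,\mu')=\bigwedge_{x}(\mu(x)\to\mu'(x))$. $(\phi^\exists\mu)(y)=\bigvee_{x\in X}\mu(x)*\phi(x,y)$, $(\phi^\forall\lambda)(x)=\bigwedge_{y\in Y}(\phi(x,y)\to\lambda(y))$. $\mathcal{K}\phi=\{\mu\in L^X\mid\phi^\forall\phi^\exists\mu=\mu\}$ with the inherited $L$-order. $\phi_{X',Y}$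 is the restriction of $\phi$ to $X'\times Y$; $\mu_{X'}$ the restriction of $\mu\in L^X$ to $X'$; $\underline{\mu'}\in L^X$ the extension of $\mu'\in L^{X'}$ by $0$ outside $X'$. An isomorphism of complete $L$-lattices is an $L$-isometric bijection. *)

From Stdlib Require Import Classical ClassicalEpsilon FunctionalExtensionality.

Set Implicit Arguments.

Record CRL := {
  car :> Type;
  le : car -> car -> Prop;
  sup : (car -> Prop) -> car;
  inf : (car -> Prop) -> car;
  zero : car;
  one : car;
  mul : car -> car -> car;
  res : car -> car -> car;
  le_refl : forall a, le a a;
  le_trans : forall a b c, le a b -> le b c -> le a c;
  le_antisym : forall a b, le a b -> le b a -> a = b;
  sup_ub : forall (S : car -> Prop) a, S a -> le a (sup S);
  sup_least : forall (S : car -> Prop) b, (forall a, S a -> le a b) -> le (sup S) b;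
  inf_lb : forall (S : car -> Prop) a, S a -> le (inf S) a;
  inf_greatest : forall (S : car -> Prop) b, (forall a, S a -> le b a) -> le b (inf S);
  zero_le : forall a, le zero a;
  le_one : forall a, le a one;
  mulC : forall a b, mul a b = mul b a;
  mulA : forall a b c, mul a (mul b c) = mul (mul a b) c;
  mul1 : forall a, mul one a = a;
  mul_sup : forall a (S : car -> Prop),
      mul a (sup S) = sup (fun c => exists b, S b /\ c = mul a b);
  res_adj : forall a b c, le (mul a b) c <-> le a (res b c)
}.

Arguments le {_}. Arguments sup {_}. Arguments inf {_}. Arguments zero {_}.
Arguments one {_}. Arguments mul {_}. Arguments res {_}.

Definition supf {L : CRL} {I : Type} (f : I -> L) : L :=
  sup (fun a => exists i, a = f i).
Definition inff {L : CRL} {I : Type} (f : I -> L) : L :=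
  inf (fun a => exists i, a = f i).

Definition phiE {L : CRL} {X Y : Type} (phi : X -> Y -> L) (mu : X -> L) : Y -> L :=
  fun y => supf (fun x => mul (mu x) (phi x y)).
Definition phiA {L : CRL} {X Y : Type} (phi : X -> Y -> L) (lam : Y -> L) : X -> L :=
  fun x => inff (fun y => res (phi x y) (lam y)).

Definition restrCtx {L : CRL} {X Y : Type} (phi : X -> Y -> L) (X' : X -> Prop)
  : {x | X' x} -> Y -> L := fun x y => phi (proj1_sig x) y.
Definition restrFun {L : CRL} {X : Type} (mu : X -> L) (X' : X -> Prop)
  : {x | X' x} -> L := fun x => mu (proj1_sig x).
Definition extZero {L : CRL} {X : Type} {X' : X -> Prop} (mu' : {x | X' x} -> L)
  : X -> L := fun x =>
  match excluded_middle_informative (X' x) with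
  | left h => mu' (exist _ x h)
  | right _ => zero
  end.

Definition inK {L : CRL} {X Y : Type} (phi : X -> Y -> L) (mu : X -> L) : Prop :=
  phiA phi (phiE phi mu) = mu.

From Stdlib Require Import Classical ClassicalEpsilon FunctionalExtensionality.

(* phiE is left adjoint to phiA, so phiE phiA phiE = phiE and phiA phiE phiA = phiA.
   For the restricted context phi', the map phiA phi' is just the restriction of phiA phi,
   phiE phi' only drops terms from the join defining phiE phi, and extending by zero does
   not change phiE.  Each of the four conditions then says that, once mu is replaced by its
   closure phiA phi (phiE phi mu), the part of that join indexed by X \ X' is redundant. *)

Section Lattice.
Context {L : CRL}.

Lemma supf_ub {I} (f : I -> L) i : le (f i) (supf f).
Proof. apply sup_ub. exists i; reflexivity. Qed.

Lemma supf_least {I} (f : I -> L) b : (forall i, le (f i) b) -> le (supf f) b.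
Proof. intros H; apply sup_least; intros a [i ->]; apply H. Qed.

Lemma inff_lb {I} (f : I -> L) i : le (inff f) (f i).
Proof. apply inf_lb. exists i; reflexivity. Qed.

Lemma inff_greatest {I} (f : I -> L) b : (forall i, le b (f i)) -> le b (inff f).
Proof. intros H; apply inf_greatest; intros a [i ->]; apply H. Qed.

Lemma mul0 (a : L) : mul zero a = zero.
Proof. apply le_antisym; [apply res_adj, zero_le | apply zero_le]. Qed.

Definition lef {X} (f g : X -> L) := forall x, le (f x) (g x).

Lemma lef_refl {X} (f : X -> L) : lef f f.
Proof. intro; apply le_refl. Qed.

Lemma lef_trans {X} (f g h : X -> L) : lef f g -> lef g h -> lef f h.
Proof. intros H1 H2 x; eapply le_trans; eauto. Qed.

Lemma lef_antisym {X} (f g : X -> L) : lef f g -> lef g f -> f = g.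
Proof. intros H1 H2; apply functional_extensionality; intro; apply le_antisym; auto. Qed.

End Lattice.

Section GaloisConnection.
Context {L : CRL} {X Y : Type} (phi : X -> Y -> L).

Lemma phiE_galois (mu : X -> L) (lam : Y -> L) :
  lef (phiE phi mu) lam <-> lef mu (phiA phi lam).
Proof.
  split; intros H.
  - intro x. apply inff_greatest; intro y. apply res_adj.
    eapply le_trans; [|apply (H y)].
    apply (supf_ub (fun x => mul (mu x) (phi x y)) x).
  - intro y. apply supf_least; intro x. apply res_adj.
    eapply le_trans; [apply H|].
    apply (inff_lb (fun y => res (phi x y) (lam y)) y).
Qed.

Lemma phiAE_extensive (mu : X -> L) : lef mu (phiA phi (phiE phi mu)).
Proof. apply phiE_galois, lef_refl. Qed.

Lemma phiEA_reductive (lam : Y -> L) : lef (phiE phi (phiA phi lam)) lam.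
Proof. apply phiE_galois, lef_refl. Qed.

Lemma phiE_mono (mu1 mu2 : X -> L) : lef mu1 mu2 -> lef (phiE phi mu1) (phiE phi mu2).
Proof. intros H. apply phiE_galois. eapply lef_trans; [apply H | apply phiAE_extensive]. Qed.

Lemma phiA_mono (lam1 lam2 : Y -> L) : lef lam1 lam2 -> lef (phiA phi lam1) (phiA phi lam2).
Proof. intros H. apply phiE_galois. eapply lef_trans; [apply phiEA_reductive | apply H]. Qed.

Lemma phiEAE (mu : X -> L) : phiE phi (phiA phi (phiE phi mu)) = phiE phi mu.
Proof. apply lef_antisym; [apply phiEA_reductive | apply phiE_mono, phiAE_extensive]. Qed.

Lemma phiAEA (lam : Y -> L) : phiA phi (phiE phi (phiA phi lam)) = phiA phi lam.
Proof. apply lef_antisym; [apply phiA_mono, phiEA_reductive | apply phiAE_extensive]. Qed.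

Lemma inK_phiA (lam : Y -> L) : inK phi (phiA phi lam).
Proof. apply phiAEA. Qed.

End GaloisConnection.

Section Restriction.
Context {L : CRL} {X Y : Type} (phi : X -> Y -> L) (X' : X -> Prop).
Local Notation phi' := (restrCtx phi X').

Lemma phiA_restrCtx (lam : Y -> L) : phiA phi' lam = restrFun (phiA phi lam) X'.
Proof. reflexivity. Qed.

Lemma phiE_extZero (mu' : {x | X' x} -> L) : phiE phi (extZero mu') = phiE phi' mu'.
Proof.
  apply lef_antisym; intro y; apply supf_least.
  - intro x. unfold extZero. destruct (excluded_middle_informative (X' x)) as [h|h].
    + apply (supf_ub (fun x' => mul (mu' x') (phi' x' y)) (exist _ x h)).
    + rewrite mul0. apply zero_le.
  - intros [x hx].
    eapply le_trans; [|apply (supf_ub (fun x => mul (extZero mu' x) (phi x y)) x)].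
    unfold extZero, restrCtx; simpl.
    destruct (excluded_middle_informative (X' x)) as [h|h]; [|contradiction].
    rewrite (proof_irrelevance _ h hx). apply le_refl.
Qed.

Lemma phiE_restrFun_le (mu : X -> L) : lef (phiE phi' (restrFun mu X')) (phiE phi mu).
Proof.
  intro y; apply supf_least. intros [x hx].
  apply (supf_ub (fun x => mul (mu x) (phi x y)) x).
Qed.

Lemma phiE_restr_closure_of_reducible :
  (forall mu, exists mu', phiE phi mu = phiE phi' mu') ->
  forall mu, phiE phi mu = phiE phi' (restrFun (phiA phi (phiE phi mu)) X').
Proof.
  intros Hred mu. destruct (Hred mu) as [mu' E].
  apply lef_antisym.
  - rewrite E. apply phiE_mono. rewrite <- phiA_restrCtx. apply phiAE_extensive.
  - rewrite <- (phiEAE phi mu) at 2. apply phiE_restrFun_le.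
Qed.

Lemma phiEA_restrCtx_of_restr_closure :
  (forall mu, phiE phi mu = phiE phi' (restrFun (phiA phi (phiE phi mu)) X')) ->
  forall lam, phiE phi (phiA phi lam) = phiE phi' (phiA phi' lam).
Proof. intros H lam. rewrite H, phiAEA. reflexivity. Qed.

Lemma inK_restrCtx_surj :
  (forall lam, phiE phi (phiA phi lam) = phiE phi' (phiA phi' lam)) ->
  forall mu, inK phi mu ->
  exists mu', inK phi' mu' /\ phiA phi (phiE phi (extZero mu')) = mu.
Proof.
  intros H mu Hmu. exists (phiA phi' (phiE phi mu)). split.
  - apply inK_phiA.
  - rewrite phiE_extZero, <- H. unfold inK in Hmu. rewrite Hmu. exact Hmu.
Qed.

Lemma reducible_of_inK_restrCtx_surj :
  (forall mu, inK phi mu ->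
     exists mu', inK phi' mu' /\ phiA phi (phiE phi (extZero mu')) = mu) ->
  forall mu, exists mu', phiE phi mu = phiE phi' mu'.
Proof.
  intros Hsurj mu. destruct (Hsurj _ (inK_phiA phi (phiE phi mu))) as [mu' [_ E]].
  exists mu'. rewrite <- (phiEAE phi mu), <- E, phiEAE. apply phiE_extZero.
Qed.

End Restriction.

Theorem mainTheorem4 (L : CRL) (X Y : Type) (phi : X -> Y -> L) (X' : X -> Prop) :
  let phi' := restrCtx phi X' in
  let i := forall mu : X -> L, exists mu' : {x | X' x} -> L,
             phiE phi mu = phiE phi' mu' in
  let ii := forall mu : X -> L,
             phiE phi mu = phiE phi' (restrFun (phiA phi (phiE phi mu)) X') in
  let iii := (fun lam : Y -> L => phiE phi (phiA phi lam))
             = (fun lam : Y -> L => phiE phi' (phiA phi' lam)) in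
  let iv := forall mu : X -> L, inK phi mu ->
             exists mu' : {x | X' x} -> L, inK phi' mu' /\
               phiA phi (phiE phi (extZero mu')) = mu in
  (i <-> ii) /\ (ii <-> iii) /\ (iii <-> iv).
Proof.
  intros phi' i ii iii iv.
  assert (i_ii : i -> ii) by exact (phiE_restr_closure_of_reducible phi X').
  assert (ii_i : ii -> i) by (intros H mu; eexists; apply H).
  assert (ii_iii : ii -> iii).
  { intros H. apply functional_extensionality.
    exact (phiEA_restrCtx_of_restr_closure phi X' H). }
  assert (iii_iv : iii -> iv).
  { intros H. exact (inK_restrCtx_surj phi X' (equal_f H)). }
  assert (iv_i : iv -> i) by exact (reducible_of_inK_restrCtx_surj phi X').
  repeat split; auto.
Qed.
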